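(* Let $h:\mathbb{R}^n\to\mathbb{R}^m$ be positively homogeneous. Suppose that: (i) for every $w\in\mathbb{R}^m$ the scalar function $\langle w,h\rangle$ belongs to $\mathrm{DCH}(\mathbb{R}^n)$; (ii) $h$ satisfies condition (C) around $0$; (iii) $\flat_0(h):=\operatorname{dist}\big(0,D^{\star}h(0)(S_m)\big)>0$, where $S_m$ is the unit sphere of $\mathbb{R}^m$. Then $h$ is linearly open around $0$ and $\operatorname{lop}(h,0)\ge\flat_0(h)$.
   Context: $\mathrm{Sub}(\mathbb{R}^n)$ is the cone of sublinear (positively homogeneous and convex, real-valued) functions on $\mathbb{R}^n$, and $\mathrm{DCH}(\mathbb{R}^n)=\mathrm{Sub}(\mathbb{R}^n)-\mathrm{Sub}(\mathbb{R}^n)$. $\mathcal{C}(\mathbb{R}^n)$ is the family of nonempty convex compact subsets of $\mathbb{R}^n$. For $A,B$ convex compact or empty, the star-difference (Pontryagin difference) is $A\stackrel{*}{-}B=\{x\in\mathbb{R}^n: x+B\subseteq A\}$. A mapping $g:\mathbb{R}^n\to\mathbb{R}^m$ is scalarly quasidifferentiable at $x$ if for every $w\in\mathbb{R}^m$ the function $\langle w,g\rangle$ is directionally differentiable at $x$ in every direction $v$ and there exist $p_w,q_w\in\mathrm{Sub}(\mathbb{R}^n)$ with $\langle w,g\rangle'(x;v)=p_w(v)-q_w(v)$ for all $v\in\mathbb{R}^n$. The star-coquasiderivative of $g$ at $x$ is the set-valued map $D^{\star}g(x):\mathbb{R}^m\rightrightarrows\mathbb{R}^n$, $D^{\star}g(x)(w)=\partial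 p_w(0)\stackrel{*}{-}\partial q_w(0)$ (where $\partial$ is the convex subdifferential); this set does not depend on the choice of the representing pair $(p_w,q_w)$. For $A\subseteq\mathbb{R}^m$, $D^{\star}g(x)(A)=\bigcup_{w\in A}D^{\star}g(x)(w)$. A mapping $g$ scalarly quasidifferentiable on a neighbourhood $U$ of $\bar x$ satisfies condition (C) around $\bar x$ if the set-valued map $x\mapsto D^{\star}g(x)(S_m)$ is upper semicontinuous at $\bar x$: for every open $O\supseteq D^{\star}g(\bar x)(S_m)$ there is $\delta>0$ with $D^{\star}g(x)(S_m)\subseteq O$ for all $x$ with $\|x-\bar x\|\le\delta$. $\operatorname{dist}(0,\emptyset)=+\infty$. $h$ is linearly open around $\bar x$ if there exist $\alpha>0$ and neighbourhoods $U$ of $\bar x$, $V$ of $h(\bar x)$ with $B^\circ(h(x),\alpha r)\cap V\subseteq h(B^\circ(x,r))$ for all $x\in U$, $r>0$ ($B^\circ$ the open ball); $\operatorname{lop}(h,\bar x)$ is the supremum of such $\alpha$. *)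

From HB Require Import structures.
From mathcomp Require Import all_boot all_order all_algebra.
From mathcomp Require Import all_classical all_reals all_analysis.
Set Implicit Arguments. Unset Strict Implicit. Unset Printing Implicit Defensive.
Import Order.TTheory GRing.Theory Num.Theory.
Import numFieldNormedType.Exports.
Local Open Scope classical_set_scope.
Local Open Scope ring_scope.

Section Defs.
Variable R : realType.

Definition dotp (n : nat) (x y : 'rV[R]_n) : R := \sum_(i < n) x 0 i * y 0 i.
Definition enorm (n : nat) (x : 'rV[R]_n) : R := Num.sqrt (dotp x x).

Definition sphere (m : nat) : set 'rV[R]_m := [set w | enorm w = 1].

Definition pos_homogeneous (n m : nat) (h : 'rV[R]_n -> 'rV[R]_m) :=
  forall (t : R) (x : 'rV[R]_n), 0 < t -> h (t *: x) = t *: h x.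

Definition sublinear (n : nat) (p : 'rV[R]_n -> R) :=
  (forall (t : R) (x : 'rV[R]_n), 0 < t -> p (t *: x) = t * p x) /\
  (forall (x y : 'rV[R]_n) (l : R), 0 <= l -> l <= 1 ->
     p (l *: x + (1 - l) *: y) <= l * p x + (1 - l) * p y).

Definition DCH (n : nat) (f : 'rV[R]_n -> R) :=
  exists p q : 'rV[R]_n -> R, sublinear p /\ sublinear q /\ forall x, f x = p x - q x.

Definition subdiff (n : nat) (f : 'rV[R]_n -> R) (x : 'rV[R]_n) : set 'rV[R]_n :=
  [set s | forall y, f x + dotp s (y - x) <= f y].

Definition stardiff (n : nat) (A B : set 'rV[R]_n) : set 'rV[R]_n :=
  [set x | forall b, B b -> A (x + b)].

Definition dirder (n : nat) (f : 'rV[R]_n -> R) (x v : 'rV[R]_n) (d : R) :=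
  (fun t : R => (f (x + t *: v) - f x) / t) @ (0 : R)^'+ --> d.

Definition scal (n m : nat) (w : 'rV[R]_m) (g : 'rV[R]_n -> 'rV[R]_m) :=
  fun y : 'rV[R]_n => dotp w (g y).

Definition qd_pair (n m : nat) (g : 'rV[R]_n -> 'rV[R]_m) (x : 'rV[R]_n)
  (w : 'rV[R]_m) (p q : 'rV[R]_n -> R) :=
  sublinear p /\ sublinear q /\ forall v, dirder (scal w g) x v (p v - q v).

Definition scal_quasidiff (n m : nat) (g : 'rV[R]_n -> 'rV[R]_m) (x : 'rV[R]_n) :=
  forall w : 'rV[R]_m, exists p q, qd_pair g x w p q.

(* star-coquasiderivative D* g(x)(w) = dp_w(0) *- dq_w(0); the set does not
   depend on the representing pair, so we take the union over all pairs *)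
Definition Dstar (n m : nat) (g : 'rV[R]_n -> 'rV[R]_m) (x : 'rV[R]_n)
  (w : 'rV[R]_m) : set 'rV[R]_n :=
  [set s | exists p q, qd_pair g x w p q /\
           stardiff (subdiff p 0) (subdiff q 0) s].

Definition Dstar_set (n m : nat) (g : 'rV[R]_n -> 'rV[R]_m) (x : 'rV[R]_n)
  (A : set 'rV[R]_m) : set 'rV[R]_n :=
  [set s | exists2 w, A w & Dstar g x w s].

Definition condC (n m : nat) (g : 'rV[R]_n -> 'rV[R]_m) (xbar : 'rV[R]_n) :=
  (exists U : set 'rV[R]_n, nbhs xbar U /\ forall x, U x -> scal_quasidiff g x) /\
  (forall O : set 'rV[R]_n, open O -> Dstar_set g xbar (@sphere m) `<=` O ->
     exists2 delta : R, 0 < delta &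
       forall x, enorm (x - xbar) <= delta -> Dstar_set g x (@sphere m) `<=` O).

(* dist(0, A) in the extended reals; dist(0, empty) = +oo *)
Definition dist0 (n : nat) (A : set 'rV[R]_n) : \bar R :=
  ereal_inf [set (enorm a)%:E | a in A].

Definition lin_open_const (n m : nat) (h : 'rV[R]_n -> 'rV[R]_m) (xbar : 'rV[R]_n)
  (alpha : R) :=
  0 < alpha /\
  exists (U : set 'rV[R]_n) (V : set 'rV[R]_m),
    nbhs xbar U /\ nbhs (h xbar) V /\
    forall x r, U x -> 0 < r ->
      forall y, enorm (y - h x) < alpha * r -> V y ->
        exists z, enorm (z - x) < r /\ h z = y.

Definition lin_open (n m : nat) (h : 'rV[R]_n -> 'rV[R]_m) (xbar : 'rV[R]_n) :=
  exists alpha, lin_open_const h xbar alpha.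

Definition lop (n m : nat) (h : 'rV[R]_n -> 'rV[R]_m) (xbar : 'rV[R]_n) : \bar R :=
  ereal_sup [set alpha%:E | alpha in lin_open_const h xbar].

End Defs.

(* By (i) every coordinate of h is a difference of sublinear functions, so h is
   Lipschitz, and positive homogeneity gives h 0 = 0.  Fix 0 < alpha < flat_0(h);
   by condition (C) every element of D*h(z)(S_m) has norm > alpha for z near 0.
   Given x near 0 and y near h x with |y - h x| < alpha rho, minimize
   z |-> |h z - y| + alpha sqrt(|z - x|^2 + eta^2) over the closed ball B(x, rho);
   for eta small the minimizer zb lies in the open ball.  If h zb <> y, the
   directional derivative of <w, h> at zb, with w = (h zb - y) / |h zb - y|, yields
   p_w - q_w + <g, .> >= 0 for g = alpha (zb - x) / sqrt(|zb - x|^2 + eta^2), i.e.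
   -g lies in D*h(zb)(w) although |g| < alpha.  Hence h zb = y, which is linear
   openness with constant alpha. *)

From HB Require Import structures.
From mathcomp Require Import all_boot all_order all_algebra.
From mathcomp Require Import all_classical all_reals all_analysis.
From mathcomp Require Import ring lra.
Import Order.TTheory GRing.Theory Num.Theory.
Import numFieldNormedType.Exports.
Set Implicit Arguments.
Unset Strict Implicit.
Unset Printing Implicit Defensive.
Local Open Scope classical_set_scope.
Local Open Scope ring_scope.

Section EuclideanNorm.
Variables (R : realType) (n : nat).
Implicit Types (x y z : 'rV[R]_n) (c : R).

Lemma dotpC x y : dotp x y = dotp y x.
Proof. by apply: eq_bigr => i _; rewrite mulrC. Qed.

Lemma dotpDr x y z : dotp x (y + z) = dotp x y + dotp x z.
Proof. by rewrite /dotp -big_split; apply: eq_bigr => i _; rewrite !mxE mulrDr. Qed.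

Lemma dotpZr c x y : dotp x (c *: y) = c * dotp x y.
Proof. by rewrite /dotp mulr_sumr; apply: eq_bigr => i _; rewrite !mxE mulrCA. Qed.

Lemma dotpBr x y z : dotp x (y - z) = dotp x y - dotp x z.
Proof. by rewrite dotpDr -scaleN1r dotpZr mulN1r. Qed.

Lemma dotpDl x y z : dotp (x + y) z = dotp x z + dotp y z.
Proof. by rewrite !(dotpC _ z) dotpDr. Qed.

Lemma dotpZl c x y : dotp (c *: x) y = c * dotp x y.
Proof. by rewrite !(dotpC _ y) dotpZr. Qed.

Lemma dotpNl x y : dotp (- x) y = - dotp x y.
Proof. by rewrite -scaleN1r dotpZl mulN1r. Qed.

Lemma dotp0r x : dotp x 0 = 0.
Proof. by rewrite /dotp big1 // => i _; rewrite mxE mulr0. Qed.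

Lemma dotpp_ge0 x : 0 <= dotp x x.
Proof. by apply: sumr_ge0 => i _; rewrite -expr2 sqr_ge0. Qed.

Lemma enorm_ge0 x : 0 <= enorm x.
Proof. exact: sqrtr_ge0. Qed.

Lemma enorm_sqr x : enorm x ^+ 2 = dotp x x.
Proof. by rewrite sqr_sqrtr // dotpp_ge0. Qed.

Lemma enorm_sqrD x y :
  enorm (x + y) ^+ 2 = enorm x ^+ 2 + 2 * dotp x y + enorm y ^+ 2.
Proof. by rewrite !enorm_sqr !(dotpDl, dotpDr) (dotpC y x); ring. Qed.

Lemma enormZ c x : enorm (c *: x) = `|c| * enorm x.
Proof.
by rewrite /enorm dotpZl dotpZr mulrA -expr2 sqrtrM ?sqr_ge0 // sqrtr_sqr.
Qed.

Lemma enormN x : enorm (- x) = enorm x.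
Proof. by rewrite -scaleN1r enormZ normrN1 mul1r. Qed.

Lemma enormBC x y : enorm (x - y) = enorm (y - x).
Proof. by rewrite -enormN opprB. Qed.

Lemma enorm0 : enorm (0 : 'rV[R]_n) = 0.
Proof. by rewrite /enorm dotp0r sqrtr0. Qed.

Lemma enorm_eq0 x : enorm x = 0 -> x = 0.
Proof.
move=> /eqP; rewrite sqrtr_eq0 => x0.
have {x0}xx0 : dotp x x = 0 by apply/eqP; rewrite eq_le x0 dotpp_ge0.
apply/rowP => i; rewrite mxE; apply/eqP; rewrite -sqrf_eq0 expr2.
by apply/eqP/(psumr_eq0P _ xx0) => // j _; rewrite -expr2 sqr_ge0.
Qed.

Lemma dotp_sqr_le x y : dotp x y ^+ 2 <= dotp x x * dotp y y.
Proof.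
set A := dotp x x; set B := dotp x y; set C := dotp y y.
have quad t : 0 <= A + 2 * t * B + t ^+ 2 * C.
  have := dotpp_ge0 (x + t *: y).
  by rewrite !(dotpDl, dotpDr, dotpZl, dotpZr) (dotpC y x) -/A -/B -/C; lra.
have [C0|C0] := eqVneq C 0.
  have [B0|B0] := eqVneq B 0; first by rewrite B0 C0 expr0n mulr0.
  have := quad (- (A + 1) / (2 * B)); rewrite C0.
  have -> : A + 2 * (- (A + 1) / (2 * B)) * B + (- (A + 1) / (2 * B)) ^+ 2 * 0
      = -1 by field.
  lra.
have Cpos : 0 < C by rewrite lt_def C0 dotpp_ge0.
have := quad (- B / C).
have -> : A + 2 * (- B / C) * B + (- B / C) ^+ 2 * C = A - B ^+ 2 / C.
  by field.
by rewrite subr_ge0 ler_pdivrMr.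
Qed.

Lemma normr_dotp_le x y : `|dotp x y| <= enorm x * enorm y.
Proof.
rewrite -sqrtrM ?dotpp_ge0 // -sqrtr_sqr ler_sqrt ?dotp_sqr_le //.
by rewrite mulr_ge0 ?dotpp_ge0.
Qed.

Lemma enormD x y : enorm (x + y) <= enorm x + enorm y.
Proof.
rewrite -(@ler_pXn2r _ 2) ?nnegrE ?addr_ge0 ?enorm_ge0 // enorm_sqrD sqrrD.
by have := normr_dotp_le x y; have := ler_norm (dotp x y); lra.
Qed.

Lemma enorm_triangle x y z : enorm (x - z) <= enorm (x - y) + enorm (y - z).
Proof. by have := enormD (x - y) (y - z); rewrite addrA subrK. Qed.

Lemma ler_dist_enorm x y z : `|enorm (x - z) - enorm (y - z)| <= enorm (x - y).
Proof.
rewrite ler_norml; have := enorm_triangle x y z; have := enorm_triangle y x z.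
rewrite (enormBC y x); lra.
Qed.

Lemma coord_le_enorm x i : `|x 0 i| <= enorm x.
Proof.
rewrite -sqrtr_sqr ler_sqrt ?dotpp_ge0 // /dotp (bigD1 i) //= -expr2.
by rewrite lerDl sumr_ge0 // => j _; rewrite -expr2 sqr_ge0.
Qed.

Lemma enorm_le_coord x c :
  0 <= c -> (forall i, `|x 0 i| <= c) -> enorm x <= n.+1%:R * c.
Proof.
move=> c0 xc; rewrite -(@ger0_norm _ (n.+1%:R * c)) ?mulr_ge0 //.
rewrite -sqrtr_sqr ler_sqrt ?sqr_ge0 //.
apply: (@le_trans _ _ (\sum_(i < n) c ^+ 2)).
  apply: ler_sum => i _; rewrite -expr2 -real_normK ?num_real //.
  by rewrite lerXn2r ?nnegrE ?normr_ge0.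
rewrite sumr_const card_ord exprMn -[c ^+ 2 *+ n]mulr_natl.
apply: ler_wpM2r; first exact: sqr_ge0.
rewrite -natrX ler_nat; apply: (@leq_trans n.+1) => //.
by rewrite expnS leq_pmulr ?expn_gt0.
Qed.

Lemma normr_mxE x : `|x| = \big[Num.max/0]_ij `|x ij.1 ij.2|.
Proof. exact: mx_normrE. Qed.

Lemma normr_le_enorm x : `|x| <= enorm x.
Proof.
rewrite normr_mxE; apply: bigmax_le; first exact: enorm_ge0.
by move=> [i j] _ /=; rewrite ord1 coord_le_enorm.
Qed.

Lemma enorm_le_normr x : enorm x <= n.+1%:R * `|x|.
Proof.
apply: enorm_le_coord => // i; rewrite normr_mxE.
exact: (le_bigmax _ (fun ij => `|x ij.1 ij.2|) (0, i)).
Qed.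

End EuclideanNorm.

Lemma lipschitz_continuous (R : realType) (V W : normedModType R) (f : V -> W) K :
  (forall a b, `|f a - f b| <= K * `|a - b|) -> continuous f.
Proof.
move=> fK x; apply/cvgrPdist_lt => e e0.
have eK : 0 < e / (`|K| + 1) by rewrite divr_gt0 // ltr_wpDl.
near=> y; apply: (le_lt_trans (fK x y)).
have Kxy : K * `|x - y| <= (`|K| + 1) * `|x - y|.
  by apply: ler_wpM2r => //; apply: (le_trans (ler_norm K)); rewrite lerDl.
apply: (le_lt_trans Kxy); rewrite mulrC -ltr_pdivlMr; last by rewrite ltr_wpDl.
by near: y; apply: cvgr_dist_lt.
Unshelve. all: end_near.
Qed.

Section EuclideanTopology.
Variables (R : realType) (n : nat).
Implicit Types (x c : 'rV[R]_n).

Lemma enorm_lipschitz_continuous (f : 'rV[R]_n -> R) K : 0 <= K ->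
  (forall a b, `|f a - f b| <= K * enorm (a - b)) -> continuous f.
Proof.
move=> K0 fK; apply: (@lipschitz_continuous _ _ _ _ (K * n.+1%:R)) => a b.
by rewrite -mulrA; apply: le_trans (fK a b) (ler_wpM2l K0 (enorm_le_normr _)).
Qed.

Lemma continuous_enormB c : continuous (fun x => enorm (x - c)).
Proof.
by apply: (@enorm_lipschitz_continuous _ 1) => // a b; rewrite mul1r ler_dist_enorm.
Qed.

Lemma continuous_enorm : continuous (@enorm R n).
Proof.
apply: (@enorm_lipschitz_continuous _ 1) => // a b.
by have := ler_dist_enorm a b 0; rewrite !subr0 mul1r.
Qed.

Lemma enorm_closed_ball_min (f : 'rV[R]_n -> R) c rho : 0 <= rho -> continuous f ->
  exists2 z, enorm (z - c) <= rho & forall z', enorm (z' - c) <= rho -> f z <= f z'.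
Proof.
move=> rho0 f_cont; set B := [set z | enorm (z - c) <= rho].
have B0 : B !=set0 by exists c; rewrite /B /= subrr enorm0.
have B_compact : compact B.
  apply: bounded_closed_compact.
    exists (enorm c + rho); split; first exact: num_real.
    move=> M cM z Bz /=; apply: le_trans (normr_le_enorm _) _.
    have := enorm_triangle z c 0; rewrite !subr0 /B /= in Bz *; lra.
  apply: (@closed_comp _ _ _ [set r | r <= rho]); last exact: closed_le.
  by move=> z _; exact: continuous_enormB.
have [z Bz z_min] := EVT_min_rV B0 B_compact (continuous_subspaceT f_cont).
by exists z => [|z' Bz']; [rewrite inE in Bz | apply: z_min; rewrite inE].
Qed.

Lemma nbhs_enorm_ball c e : 0 < e -> nbhs c [set x | enorm (x - c) < e].
Proof.
move=> e0; apply/nbhs_ballP; exists (e / n.+1%:R); first by rewrite /= divr_gt0.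
move=> x; rewrite -ball_normE /ball_ /= distrC => xc.
by apply: (le_lt_trans (enorm_le_normr _)); rewrite mulrC -ltr_pdivlMr.
Qed.

Lemma nbhs0_enormP (U : set 'rV[R]_n) : nbhs (0 : 'rV[R]_n) U ->
  exists2 e, 0 < e & forall x, enorm x < e -> U x.
Proof.
move=> /nbhs_ballP [e e0 eU]; exists e => // x xe; apply: eU.
rewrite -ball_normE /ball_ /= sub0r normrN.
exact: le_lt_trans (normr_le_enorm _) xe.
Qed.

End EuclideanTopology.

Definition enorm_lipschitz (R : realType) n m (f : 'rV[R]_n -> 'rV[R]_m) (L : R) :=
  forall a b, enorm (f a - f b) <= L * enorm (a - b).

Section Sublinear.
Variables (R : realType) (n : nat) (p : 'rV[R]_n -> R).
Hypothesis subp : sublinear p.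

Lemma sublinear0 : p 0 = 0.
Proof. by have := subp.1 2 0 (ltr0Sn _ 1); rewrite scaler0 => p0; lra. Qed.

Lemma sublinearD x y : p (x + y) <= p x + p y.
Proof.
have [hom cvx] := subp; have half_ge0 : (0 : R) <= 2^-1 by rewrite invr_ge0.
have := cvx x y 2^-1 half_ge0; rewrite invf_le1 ?ler1n // => /(_ isT).
have -> : (1 - 2^-1 : R) = 2^-1 by rewrite {1}(splitr 1) mul1r addrK.
rewrite -scalerDr -mulrDr => cvx_half.
have := hom 2 (2^-1 *: (x + y)) (ltr0Sn _ 1); rewrite scalerA divff ?pnatr_eq0 // scale1r.
by move=> ->; rewrite -[p x + p y](@mulVKf _ 2) ?pnatr_eq0 // ler_pM2l.
Qed.

Lemma sublinearZ c v : p (c *: v) <= `|c| * (`|p v| + `|p (- v)|).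
Proof.
have [c0|c0|->] := ltgtP c 0.
- rewrite -[c *: v]opprK -scalerN -scaleNr subp.1 ?oppr_gt0 // ltr0_norm //.
  apply: ler_wpM2l; first by rewrite oppr_ge0 ltW.
  by apply: le_trans (ler_norm _) _; rewrite lerDr.
- rewrite subp.1 // gtr0_norm //; apply: ler_wpM2l; first exact: ltW.
  by apply: le_trans (ler_norm _) _; rewrite lerDl.
- by rewrite scale0r sublinear0 normr0 mul0r.
Qed.

Definition sublinear_const : R :=
  \sum_(i < n) (`|p (delta_mx 0 i)| + `|p (- delta_mx 0 i)|).

Lemma sublinear_const_ge0 : 0 <= sublinear_const.
Proof. by apply: sumr_ge0 => i _; rewrite addr_ge0. Qed.

Lemma sublinear_le_enorm x : p x <= sublinear_const * enorm x.
Proof.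
rewrite {1}(row_sum_delta x).
apply: (@le_trans _ _
  (\sum_(i < n) `|x 0 i| * (`|p (delta_mx 0 i)| + `|p (- delta_mx 0 i)|))).
  apply: (big_ind2 (fun a b => p a <= b)); first by rewrite sublinear0.
    by move=> a1 b1 a2 b2 pa1 pa2; apply: le_trans (sublinearD _ _) (lerD pa1 pa2).
  by move=> i _; apply: sublinearZ.
rewrite mulr_suml; apply: ler_sum => i _.
by rewrite mulrC ler_wpM2l ?addr_ge0 // coord_le_enorm.
Qed.

Lemma sublinear_lipschitz a b : `|p a - p b| <= sublinear_const * enorm (a - b).
Proof.
have := sublinear_le_enorm (a - b); have := sublinear_le_enorm (b - a).
have := sublinearD (a - b) b; have := sublinearD (b - a) a.
rewrite !subrK (enormBC b a) ler_norml; lra.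
Qed.

End Sublinear.

Lemma DCH_lipschitz (R : realType) n (f : 'rV[R]_n -> R) : DCH f ->
  exists2 K, 0 <= K & forall a b, `|f a - f b| <= K * enorm (a - b).
Proof.
move=> [p [q [subp [subq fpq]]]].
exists (sublinear_const p + sublinear_const q).
  by rewrite addr_ge0 ?sublinear_const_ge0.
move=> a b; rewrite !fpq mulrDl.
have -> : p a - q a - (p b - q b) = (p a - p b) - (q a - q b) by ring.
by rewrite (le_trans (ler_normB _ _)) // lerD ?sublinear_lipschitz.
Qed.

Lemma dotp_deltal (R : realType) n (i : 'I_n) (v : 'rV[R]_n) :
  dotp (delta_mx 0 i) v = v 0 i.
Proof.
rewrite /dotp (bigD1 i) //= big1 ?addr0 => [|j ji]; first by rewrite mxE !eqxx mul1r.
by rewrite mxE (negbTE ji) andbF mul0r.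
Qed.

Lemma scal_DCH_lipschitz (R : realType) n m (h : 'rV[R]_n -> 'rV[R]_m) :
  (forall w, DCH (scal w h)) -> exists2 L, 0 <= L & enorm_lipschitz h L.
Proof.
move=> hDCH.
have /fin_all_exists [K K_lip] : forall i : 'I_m, exists K : R,
    0 <= K /\ forall a b, `|h a 0 i - h b 0 i| <= K * enorm (a - b).
  move=> i; have [K K0 fK] := DCH_lipschitz (hDCH (delta_mx 0 i)).
  by exists K; split => // a b; have := fK a b; rewrite /scal !dotp_deltal.
have K_ge0 : 0 <= \sum_i K i by apply: sumr_ge0 => i _; case: (K_lip i).
exists (m.+1%:R * \sum_i K i); first by rewrite mulr_ge0.
move=> a b; rewrite -mulrA; apply: enorm_le_coord => [|i].
  by rewrite mulr_ge0 ?enorm_ge0.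
rewrite !mxE; case: (K_lip i) => _ /(_ a b) /le_trans; apply.
rewrite ler_wpM2r ?enorm_ge0 // (bigD1 i) //= lerDl.
by apply: sumr_ge0 => j _; case: (K_lip j).
Qed.

Section RealInequalities.
Variable R : realType.

Lemma ler_lim_at_right (F : R -> R) d a K t0 :
  F t @[t --> 0^'+] --> d -> 0 < t0 ->
  (forall t, 0 < t -> t < t0 -> a <= F t + t * K) -> a <= d.
Proof.
move=> Fd t00 aF.
have : F t + t * K @[t --> 0^'+] --> d + 0 * K.
  apply: cvgD => //; apply: cvgM; last exact: cvg_cst.
  by apply: cvg_at_right_filter; exact: cvg_id.
rewrite mul0r addr0 => /cvgr_to_ge; apply.
near=> t; apply: aF; first by near: t; exact: nbhs_right_gt.
by near: t; exact: nbhs_right_lt.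
Unshelve. all: end_near.
Qed.

Lemma ler_sub_sqr (X Y : R) : 0 <= X -> 0 < Y -> X - Y <= (X ^+ 2 - Y ^+ 2) / (2 * Y).
Proof.
move=> X0 Y0; rewrite ler_pdivlMr ?mulr_gt0 //.
by have := sqr_ge0 (X - Y); nra.
Qed.

Lemma sqrt_sqrD_lipschitz (X Y e : R) : 0 <= X -> 0 <= Y -> 0 < e ->
  `|Num.sqrt (X ^+ 2 + e ^+ 2) - Num.sqrt (Y ^+ 2 + e ^+ 2)| <= `|X - Y|.
Proof.
move=> X0 Y0 e0.
have sqrtD_gt0 Z : 0 < Num.sqrt (Z ^+ 2 + e ^+ 2).
  by rewrite sqrtr_gt0 ltr_wpDl ?sqr_ge0 ?exprn_gt0.
have le_sqrtD Z : 0 <= Z -> Z <= Num.sqrt (Z ^+ 2 + e ^+ 2).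
  move=> Z0; rewrite -{1}(ger0_norm Z0) -sqrtr_sqr ler_sqrt ?lerDl ?sqr_ge0 //.
  by rewrite addr_ge0 ?sqr_ge0.
set SX := Num.sqrt (X ^+ 2 + _); set SY := Num.sqrt (Y ^+ 2 + _).
have SXY0 : 0 < SX + SY := addr_gt0 (sqrtD_gt0 X) (sqrtD_gt0 Y).
have prod_eq : `|SX - SY| * (SX + SY) = `|X - Y| * (X + Y).
  rewrite -(gtr0_norm SXY0) -normrM -subr_sqr !sqr_sqrtr ?addr_ge0 ?sqr_ge0 //.
  have -> : X ^+ 2 + e ^+ 2 - (Y ^+ 2 + e ^+ 2) = X ^+ 2 - Y ^+ 2 by ring.
  by rewrite subr_sqr normrM (ger0_norm (addr_ge0 X0 Y0)).
rewrite -(ler_pM2r SXY0) prod_eq ler_wpM2l // lerD //; exact: le_sqrtD.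
Qed.

End RealInequalities.

Section SmoothedNorm.
Variables (R : realType) (n : nat) (eta : R).
Hypothesis eta_gt0 : 0 < eta.
Implicit Types (u d : 'rV[R]_n).

Definition snorm u := Num.sqrt (enorm u ^+ 2 + eta ^+ 2).

Lemma snorm_gt0 u : 0 < snorm u.
Proof. by rewrite sqrtr_gt0 ltr_wpDl ?sqr_ge0 ?exprn_gt0. Qed.

Lemma snorm_sqr u : snorm u ^+ 2 = enorm u ^+ 2 + eta ^+ 2.
Proof. by rewrite sqr_sqrtr // addr_ge0 ?sqr_ge0. Qed.

Lemma snorm0 : snorm 0 = eta.
Proof. by rewrite /snorm enorm0 expr0n add0r sqrtr_sqr gtr0_norm. Qed.

Lemma enorm_lt_snorm u : enorm u < snorm u.
Proof.
rewrite -[X in X < _]ger0_norm ?enorm_ge0 // -sqrtr_sqr ltr_sqrt.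
  by rewrite ltrDl exprn_gt0.
by rewrite ltr_wpDl ?sqr_ge0 ?exprn_gt0.
Qed.

Lemma snorm_lipschitz u d : `|snorm u - snorm d| <= enorm (u - d).
Proof.
apply: le_trans (sqrt_sqrD_lipschitz (enorm_ge0 u) (enorm_ge0 d) eta_gt0) _.
by have := ler_dist_enorm u d 0; rewrite !subr0.
Qed.

Lemma snormD_sub_le u d :
  snorm (u + d) - snorm u <= dotp ((snorm u)^-1 *: u) d + enorm d ^+ 2 / (2 * snorm u).
Proof.
apply: le_trans (ler_sub_sqr (sqrtr_ge0 _) (snorm_gt0 u)) _.
rewrite !snorm_sqr enorm_sqrD dotpZl le_eqVlt; apply/orP; left; apply/eqP.
by field; rewrite gt_eqF ?snorm_gt0.
Qed.

End SmoothedNorm.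

Lemma enormD_sub_le (R : realType) n (a d : 'rV[R]_n) : 0 < enorm a ->
  enorm (a + d) - enorm a <= dotp ((enorm a)^-1 *: a) d + enorm d ^+ 2 / (2 * enorm a).
Proof.
move=> a0; apply: le_trans (ler_sub_sqr (enorm_ge0 _) a0) _.
rewrite enorm_sqrD dotpZl le_eqVlt; apply/orP; left; apply/eqP.
by field; rewrite gt_eqF.
Qed.

Lemma lipschitz_enormB_sub_le (R : realType) n m (h : 'rV[R]_n -> 'rV[R]_m) L
    (y : 'rV[R]_m) (zb z : 'rV[R]_n) :
  0 <= L -> enorm_lipschitz h L -> 0 < enorm (h zb - y) ->
  enorm (h z - y) - enorm (h zb - y) <=
    dotp ((enorm (h zb - y))^-1 *: (h zb - y)) (h z - h zb) +
    L ^+ 2 * enorm (z - zb) ^+ 2 / (2 * enorm (h zb - y)).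
Proof.
move=> L_ge0 h_lip A_gt0; have := enormD_sub_le (h z - h zb) A_gt0.
rewrite (_ : h zb - y + _ = h z - y); last by rewrite addrC addrA subrK.
move/le_trans; apply; rewrite lerD2l -exprMn.
apply: ler_wpM2r; first by rewrite invr_ge0 mulr_ge0 // ltW.
by rewrite lerXn2r ?nnegrE ?mulr_ge0 ?enorm_ge0 ?h_lip.
Qed.

Definition penalized_residual (R : realType) n m (h : 'rV[R]_n -> 'rV[R]_m) (y : 'rV[R]_m)
    (beta eta : R) (x z : 'rV[R]_n) :=
  enorm (h z - y) + beta * snorm eta (z - x).

Lemma continuous_penalized_residual (R : realType) n m (h : 'rV[R]_n -> 'rV[R]_m) L y
    (beta eta : R) x :
  0 <= L -> enorm_lipschitz h L -> 0 < beta -> 0 < eta ->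
  continuous (penalized_residual h y beta eta x).
Proof.
move=> L_ge0 h_lip beta_gt0 eta_gt0.
apply: (@enorm_lipschitz_continuous _ _ _ (L + beta)) => [|a b].
  by rewrite addr_ge0 // ltW.
rewrite /penalized_residual opprD addrACA mulrDl -mulrBr.
apply: le_trans (ler_normD _ _) _; rewrite normrM gtr0_norm //; apply: lerD.
  by apply: le_trans (ler_dist_enorm _ _ _) _; exact: h_lip.
by rewrite ler_pM2l // (le_trans (snorm_lipschitz _ _ _)) // opprB addrA subrK.
Qed.

Lemma stardiff_subdiff0 (R : realType) n (p q : 'rV[R]_n -> R) (g : 'rV[R]_n) :
  sublinear p -> sublinear q -> (forall v, 0 <= p v - q v + dotp g v) ->
  stardiff (subdiff p 0) (subdiff q 0) (- g).
Proof.
move=> subp subq pqg b qb v; move: (qb v) (pqg v).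
by rewrite /= !sublinear0 // subr0 !add0r dotpDl dotpNl; lra.
Qed.

Section FirstOrderCondition.
Variables (R : realType) (n m : nat) (h : 'rV[R]_n -> 'rV[R]_m) (L : R).
Hypotheses (L_ge0 : 0 <= L) (h_lip : enorm_lipschitz h L).
Variables (x zb : 'rV[R]_n) (y : 'rV[R]_m) (beta eta r : R).
Hypotheses (beta_gt0 : 0 < beta) (eta_gt0 : 0 < eta) (r_gt0 : 0 < r).
Hypothesis zb_min : forall z, enorm (z - zb) < r ->
  penalized_residual h y beta eta x zb <= penalized_residual h y beta eta x z.
Hypothesis hzb_y : 0 < enorm (h zb - y).

Lemma first_order_ineq p q :
  qd_pair h zb ((enorm (h zb - y))^-1 *: (h zb - y)) p q ->
  forall v, 0 <= p v - q v + dotp ((beta / snorm eta (zb - x)) *: (zb - x)) v.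
Proof.
move=> [_ [_ dir]] v.
set A := enorm (h zb - y); set w := A^-1 *: (h zb - y).
set u := zb - x; set S := snorm eta u.
have S_gt0 : 0 < S := snorm_gt0 eta_gt0 u.
(* K bounds the quadratic remainders of both terms of the penalized residual. *)
set K := L ^+ 2 * (enorm v ^+ 2 / (2 * A)) + beta * (enorm v ^+ 2 / (2 * S)).
set g := dotp _ v.
have g_eq : g = beta * dotp (S^-1 *: u) v by rewrite /g !dotpZl mulrA.
rewrite -lerBlDr sub0r.
have v1_gt0 : 0 < enorm v + 1 by rewrite ltr_wpDl ?enorm_ge0.
apply: (@ler_lim_at_right _ _ _ _ K (r / (enorm v + 1)) (dir v)).
  by rewrite divr_gt0.
move=> t t_gt0 t_lt; set z := zb + t *: v.
have ztv : enorm (z - zb) = t * enorm v by rewrite /z addrC addKr enormZ gtr0_norm.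
have zr : enorm (z - zb) < r.
  rewrite ztv; rewrite ltr_pdivlMr // in t_lt; apply: le_lt_trans t_lt.
  by rewrite ler_pM2l // lerDl.
have dist_le := lipschitz_enormB_sub_le z L_ge0 h_lip hzb_y.
rewrite ztv -/A -/w in dist_le.
have snorm_le : snorm eta (z - x) - S
    <= t * dotp (S^-1 *: u) v + t ^+ 2 * (enorm v ^+ 2 / (2 * S)).
  have -> : z - x = u + t *: v by rewrite /z /u addrAC.
  apply: le_trans (snormD_sub_le eta_gt0 u (t *: v)) _.
  by rewrite dotpZr enormZ gtr0_norm // exprMn -mulrA.
have lin : dotp w (h z - h zb)
    = t * ((scal w h (zb + t *: v) - scal w h zb) / t).
  by rewrite mulrC divfK ?gt_eqF // dotpBr.
have := zb_min zr; rewrite /penalized_residual -/A -/u -/S => min_ineq.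
have key : 0 <= dotp w (h z - h zb) + t ^+ 2 * K + t * g.
  rewrite g_eq /K; have := ler_wpM2l (ltW beta_gt0) snorm_le; lra.
have : 0 <= t * ((scal w h z - scal w h zb) / t + t * K + g).
  by move: key; rewrite lin; congr (_ <= _); ring.
by rewrite pmulr_rge0 //; lra.
Qed.

Lemma local_min_Dstar : scal_quasidiff h zb ->
  Dstar_set h zb (@sphere R m) (- ((beta / snorm eta (zb - x)) *: (zb - x))).
Proof.
move=> /(_ ((enorm (h zb - y))^-1 *: (h zb - y))) [p [q pq]].
exists ((enorm (h zb - y))^-1 *: (h zb - y)).
  by rewrite /sphere /= enormZ ger0_norm ?invr_ge0 ?enorm_ge0 // mulVf ?gt_eqF.
exists p, q; split => //; have [subp [subq _]] := pq.
exact: stardiff_subdiff0 (first_order_ineq pq).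
Qed.

End FirstOrderCondition.

Section ExtendedReals.
Variable R : realType.
Implicit Types (a b D E : \bar R).

Lemma lte_EFin_between a b : (a < b)%E -> exists t : R, (a < t%:E < b)%E.
Proof.
case: a b => [r| |] [s| |] //= ab.
- by exists ((r + s) / 2); rewrite !lte_fin !midf_lt // -lte_fin.
- by exists (r + 1); rewrite lte_fin ltry ltrDl ltr01.
- by exists (s - 1); rewrite lte_fin ltNyr gtrDl oppr_lt0 ltr01.
- by exists 0; rewrite ltNyr ltry.
Qed.

Lemma exists_pos_lte D : (0 < D)%E -> exists2 t : R, 0 < t & (t%:E < D)%E.
Proof. by move=> /lte_EFin_between [t /andP [t0 tD]]; exists t; rewrite -?lte_fin. Qed.

Lemma lee_pos_lb D E : (0 < D)%E ->
  (forall t : R, 0 < t -> (t%:E < D)%E -> (t%:E <= E)%E) -> (D <= E)%E.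
Proof.
move=> D0 DE; rewrite leNgt; apply/negP => ED.
have /lte_EFin_between [t /andP [ Et tD]] : (Order.max 0 E < D)%E by rewrite gt_max D0.
move: Et; rewrite gt_max => /andP [t0 Et].
by have := DE t _ tD; rewrite -lte_fin => /(_ t0); rewrite leNgt Et.
Qed.

End ExtendedReals.

Lemma pos_homogeneous0 (R : realType) n m (h : 'rV[R]_n -> 'rV[R]_m) :
  pos_homogeneous h -> h 0 = 0.
Proof.
move=> hom; have := hom 2 0 (ltr0Sn _ 1); rewrite scaler0 => h0.
have : (2 - 1 : R) *: h 0 = 0 by rewrite scalerBl scale1r -h0 subrr.
have -> : (2 - 1 : R) = 1 by lra.
by rewrite scale1r.
Qed.

Section LocalSurjection.
Variables (R : realType) (n m : nat) (h : 'rV[R]_n -> 'rV[R]_m) (L : R).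
Hypotheses (L_ge0 : 0 <= L) (h_lip : enorm_lipschitz h L).
Variables (x : 'rV[R]_n) (beta rho : R).
Hypotheses (beta_gt0 : 0 < beta) (rho_gt0 : 0 < rho).
Hypothesis h_regular : forall z, enorm (z - x) < rho ->
  scal_quasidiff h z /\ forall s, Dstar_set h z (@sphere R m) s -> beta < enorm s.

Lemma local_surjection y : enorm (y - h x) < beta * rho ->
  exists z, enorm (z - x) < rho /\ h z = y.
Proof.
move=> yx; set N := enorm (h x - y).
have N_lt : N < beta * rho by rewrite /N enormBC.
(* Small enough that the minimizer below cannot reach the sphere of radius rho. *)
set eta := (beta * rho - N) / (2 * beta).
have eta_gt0 : 0 < eta by rewrite divr_gt0 ?subr_gt0 ?mulr_gt0.
set psi := penalized_residual h y beta eta x.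
have psi_cont : continuous psi :=
  continuous_penalized_residual L_ge0 h_lip beta_gt0 eta_gt0.
have [zb zb_rho zb_min] := enorm_closed_ball_min x (ltW rho_gt0) psi_cont.
set u := zb - x.
have u_lt : enorm u < rho.
  have := zb_min x; rewrite subrr enorm0 => /(_ (ltW rho_gt0)).
  rewrite /psi /penalized_residual subrr snorm0 // -/u -/N => min_x.
  have beta_eta : beta * eta = (beta * rho - N) / 2.
    by rewrite /eta; field; rewrite gt_eqF.
  have beta_u : beta * enorm u < beta * snorm eta u.
    by rewrite ltr_pM2l // enorm_lt_snorm.
  by rewrite -(ltr_pM2l beta_gt0); have := enorm_ge0 (h zb - y); lra.
exists zb; split => //; apply/eqP/negPn/negP => hzb_neq.
have hzb_y : 0 < enorm (h zb - y).
  rewrite lt_def enorm_ge0 andbT; apply: contra hzb_neq => /eqP/enorm_eq0/eqP.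
  by rewrite subr_eq0.
have zb_lmin z : enorm (z - zb) < rho - enorm u -> psi zb <= psi z.
  move=> z_near; apply: zb_min.
  by have := enorm_triangle z zb x; rewrite -/u; lra.
have rho_u : 0 < rho - enorm u by rewrite subr_gt0.
have [zb_qd Dstar_gt] := h_regular u_lt.
have := Dstar_gt _
  (local_min_Dstar L_ge0 h_lip beta_gt0 eta_gt0 rho_u zb_lmin hzb_y zb_qd).
rewrite enormN enormZ ger0_norm ?divr_ge0 ?enorm_ge0 ?ltW ?snorm_gt0 //.
rewrite mulrAC ltr_pdivlMr ?snorm_gt0 // ltr_pM2l //.
by rewrite -/u ltNge (ltW (enorm_lt_snorm eta_gt0 u)).
Qed.

End LocalSurjection.

Lemma Dstar_enorm_gt_near (R : realType) n m (h : 'rV[R]_n -> 'rV[R]_m) (beta : R) :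
  condC h 0 -> (beta%:E < dist0 (Dstar_set h 0 (@sphere R m)))%E ->
  exists2 delta : R, 0 < delta & forall x, enorm x <= delta ->
    forall s, Dstar_set h x (@sphere R m) s -> beta < enorm s.
Proof.
move=> [_ usc] beta_lt; set O := [set s : 'rV[R]_n | beta < enorm s].
have O_open : open O.
  apply: (@open_comp _ _ _ [set r | beta < r]); last exact: open_gt.
  by move=> z _; exact: continuous_enorm.
have DO : Dstar_set h 0 (@sphere R m) `<=` O.
  move=> s Ds; rewrite /O /= -lte_fin; apply: lt_le_trans beta_lt _.
  by apply: ereal_inf_lbound; exists s.
have [delta delta_gt0 Dstar_O] := usc O O_open DO.
by exists delta => // x xd; apply: Dstar_O; rewrite subr0.
Qed.

Lemma lin_open_const_lt_dist (R : realType) n m (h : 'rV[R]_n -> 'rV[R]_m) (L alpha : R) :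
  h 0 = 0 -> 0 <= L -> enorm_lipschitz h L -> condC h 0 -> 0 < alpha ->
  (alpha%:E < dist0 (Dstar_set h 0 (@sphere R m)))%E -> lin_open_const h 0 alpha.
Proof.
move=> h0 L_ge0 h_lip hC alpha_gt0 alpha_lt.
have [delta delta_gt0 Dstar_gt] := Dstar_enorm_gt_near hC alpha_lt.
have [[U [U0 U_qd]] _] := hC; have [e e_gt0 eU] := nbhs0_enormP U0.
set c := Num.min delta e / 2.
have c_gt0 : 0 < c by rewrite divr_gt0 // lt_min delta_gt0.
set eps := Num.min c (alpha * c / (2 * (L + 1))).
have L2_gt0 : 0 < 2 * (L + 1) by lra.
have eps_gt0 : 0 < eps by rewrite lt_min c_gt0 /= divr_gt0 // mulr_gt0.
have eps_c : eps <= c by rewrite ge_min lexx.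
have L_eps : eps * (2 * (L + 1)) <= alpha * c.
  by rewrite -ler_pdivlMr // ge_min lexx orbT.
split => //.
exists [set x | enorm (x - 0) < eps], [set y | enorm (y - h 0) < alpha * c / 2].
split; first exact: nbhs_enorm_ball.
split; first by apply: nbhs_enorm_ball; apply: divr_gt0 => //; exact: mulr_gt0.
move=> x r /= xU r_gt0 y yx yV; rewrite subr0 in xU; rewrite h0 subr0 in yV.
have rc_gt0 : 0 < Num.min r c by rewrite lt_min r_gt0.
have y_near : enorm (y - h x) < alpha * Num.min r c.
  rewrite minr_pMr ?ltW // lt_min yx /=; apply: le_lt_trans (enorm_triangle y 0 (h x)) _.
  have := h_lip x 0; rewrite h0 !subr0 sub0r enormN.
  nra.
have regular z : enorm (z - x) < Num.min r c -> scal_quasidiff h z /\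
    forall s, Dstar_set h z (@sphere R m) s -> alpha < enorm s.
  move=> zx; have z_small : enorm z < Num.min delta e.
    have rc_c : Num.min r c <= c by rewrite ge_min lexx orbT.
    have c2 : c + c = Num.min delta e by rewrite /c -splitr.
    by have := enorm_triangle z x 0; rewrite !subr0; lra.
  split; last by apply/Dstar_gt/ltW/(lt_le_trans z_small); rewrite ge_min lexx.
  by apply/U_qd/eU/(lt_le_trans z_small); rewrite ge_min lexx orbT.
have [z [zx hz]] := local_surjection L_ge0 h_lip alpha_gt0 rc_gt0 regular y_near.
by exists z; split => //; apply: lt_le_trans zx _; rewrite ge_min lexx.
Qed.

Theorem mainTheorem8 (R : realType) (n m : nat) (h : 'rV[R]_n -> 'rV[R]_m) :
  pos_homogeneous h ->
  (forall w : 'rV[R]_m, DCH (scal w h)) ->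
  condC h 0 ->
  (0 < dist0 (Dstar_set h 0 (@sphere R m)))%E ->
  lin_open h 0 /\ (dist0 (Dstar_set h 0 (@sphere R m)) <= lop h 0)%E.
Proof.
move=> hom hDCH hC dist_gt0.
have [L L_ge0 h_lip] := scal_DCH_lipschitz hDCH.
have lin_open_alpha := lin_open_const_lt_dist (pos_homogeneous0 hom) L_ge0 h_lip hC.
split.
  have [alpha alpha_gt0 alpha_lt] := exists_pos_lte dist_gt0.
  by exists alpha; exact: lin_open_alpha.
apply: lee_pos_lb => // t t_gt0 t_lt.
by apply: ereal_sup_ubound; exists t => //; exact: lin_open_alpha.
Qed.
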